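(* Let $R>0$, let $\{\beta_k\}_{k\ge0}\subseteq(0,1)$ and $\alpha_0\in(0,\frac1R)$. Define sequences $\{A_k\},\{B_k\},\{\alpha_k\}$ by $B_0=1$ and, for $k\ge0$, $$A_k=\frac{\alpha_k}{2\beta_k}B_k,\qquad B_{k+1}=\frac{B_k}{1-\beta_k},\qquad \alpha_{k+1}=\frac{\alpha_k\beta_{k+1}(1-\alpha_k^2R^2-\beta_k^2)}{\beta_k(1-\beta_k)(1-\alpha_k^2R^2)}.$$ Suppose $\alpha_k\in(0,\frac1R)$ for all $k\ge0$. Let $\mathbf L\colon\mathbb R^n\times\mathbb R^m\to\mathbb R$ be $R$-smooth and convex-concave, let $\mathbf z^0\in\mathbb R^n\times\mathbb R^m$, and define the EAG iterates $$\mathbf z^{k+1/2}=\mathbf z^k+\beta_k(\mathbf z^0-\mathbf z^k)-\alpha_k\mathbf G(\mathbf z^k),\qquad \mathbf z^{k+1}=\mathbf z^k+\beta_k(\mathbf z^0-\mathbf z^k)-\alpha_k\mathbf G(\mathbf z^{k+1/2}),\quad k\ge0.$$ Then the sequence $$V_k:=A_k\|\mathbf G(\mathbf z^k)\|^2+B_k\langle\mathbf G(\mathbf z^k),\mathbf z^k-\mathbf z^0\rangle$$ is nonincreasing in $k$.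
   Context: Write $\mathbf z=(\mathbf x,\mathbf y)$. $\mathbf L$ convex-concave: convex in $\mathbf x$ for fixed $\mathbf y$, concave in $\mathbf y$ for fixed $\mathbf x$. $\mathbf G(\mathbf z)=(\nabla_{\mathbf x}\mathbf L(\mathbf x,\mathbf y),-\nabla_{\mathbf y}\mathbf L(\mathbf x,\mathbf y))$; $\mathbf L$ is $R$-smooth if it is differentiable and $\mathbf G$ is $R$-Lipschitz. *)

From mathcomp Require Import all_boot all_algebra all_classical all_reals all_analysis.
Import GRing.Theory Num.Theory.
Local Open Scope ring_scope.

Set Implicit Arguments. Unset Strict Implicit. Unset Printing Implicit Defensive.

Section Defs.
Variables (R : realType) (n m : nat).
Notation Z := ('rV[R]_n * 'rV[R]_m)%type.

Definition dotv (k : nat) (u v : 'rV[R]_k) : R := \sum_(i < k) u 0 i * v 0 i.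
Definition dotz (z w : Z) : R := dotv z.1 w.1 + dotv z.2 w.2.
Definition normz (z : Z) : R := Num.sqrt (dotz z z).

Definition convex_concave (L : Z -> R) : Prop :=
  (forall (y : 'rV[R]_m) (x1 x2 : 'rV[R]_n) (t : R), 0 <= t <= 1 ->
     L ((1 - t) *: x1 + t *: x2, y) <= (1 - t) * L (x1, y) + t * L (x2, y)) /\
  (forall (x : 'rV[R]_n) (y1 y2 : 'rV[R]_m) (t : R), 0 <= t <= 1 ->
     (1 - t) * L (x, y1) + t * L (x, y2) <= L (x, (1 - t) *: y1 + t *: y2)).

(* Gradient field G(z) = (grad_x L(z), - grad_y L(z)), via partial derivatives
   read off from the (Frechet) differential 'd L z. *)
Definition dL (L : 'rV[R]_n * 'rV[R]_m -> R) := fun z h => ('d L z h : R).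

Definition Gop (L : Z -> R) (z : Z) : Z :=
  (\row_(i < n) dL L z (delta_mx 0 i, 0),
   - \row_(j < m) dL L z (0, delta_mx 0 j)).

Definition smooth_cc (Rs : R) (L : Z -> R) : Prop :=
  (forall z, differentiable L z) /\
  (forall z w : Z, normz (Gop L z - Gop L w) <= Rs * normz (z - w)).

Fixpoint alpha_seq (Rs : R) (beta : nat -> R) (a0 : R) (k : nat) : R :=
  match k with
  | 0 => a0
  | k'.+1 => let a := alpha_seq Rs beta a0 k' in
      a * beta k'.+1 * (1 - a ^+ 2 * Rs ^+ 2 - beta k' ^+ 2)
        / (beta k' * (1 - beta k') * (1 - a ^+ 2 * Rs ^+ 2))
  end.

Fixpoint B_seq (beta : nat -> R) (k : nat) : R :=
  match k with
  | 0 => 1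
  | k'.+1 => B_seq beta k' / (1 - beta k')
  end.

Definition A_seq (Rs : R) (beta : nat -> R) (a0 : R) (k : nat) : R :=
  alpha_seq Rs beta a0 k / (2 * beta k) * B_seq beta k.

Fixpoint eag (G : Z -> Z) (alpha beta : nat -> R) (z0 : Z) (k : nat) : Z :=
  match k with
  | 0 => z0
  | k'.+1 => let z := eag G alpha beta z0 k' in
      let zh := z + beta k' *: (z0 - z) - alpha k' *: G z in
      z + beta k' *: (z0 - z) - alpha k' *: G zh
  end.

Definition Vk (Rs : R) (beta : nat -> R) (a0 : R) (L : Z -> R) (z0 : Z) (k : nat) : R :=
  let G := Gop L in
  let z := eag G (alpha_seq Rs beta a0) beta z0 k in
  A_seq Rs beta a0 k * normz (G z) ^+ 2 + B_seq beta k * dotz (G z) (z - z0).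

End Defs.

(* Write g, h, u for G at z^k, z^(k+1/2), z^(k+1), and w = z^k - z^0.  After substituting
   the EAG update, V_k - V_(k+1) is a quadratic form in the inner products of g, h, u, w, and
   the recursion defining alpha_(k+1) is what makes it a positive combination of three
   nonnegative quantities:
   - the monotonicity of G (a consequence of the convexity-concavity of L) applied to
     z^(k+1) - z^k = -beta_k w - alpha_k h;
   - the Lipschitz bound |u - h|^2 <= alpha_k^2 R^2 |g - h|^2, since
     z^(k+1) - z^(k+1/2) = alpha_k (g - h);
   - a square |h + lambda u|^2. *)

From mathcomp Require Import all_boot all_algebra all_classical all_reals all_analysis.
From mathcomp Require Import all_order ring lra.
Import Order.TTheory GRing.Theory Num.Theory numFieldNormedType.Exports.
Local Open Scope ring_scope.
Local Open Scope classical_set_scope.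

Set Implicit Arguments. Unset Strict Implicit. Unset Printing Implicit Defensive.

Section SlopeChord.
Variable R : realType.

Lemma slope_cvg_le_chord (f : R -> R) (d f0 f1 : R) :
  t^-1 * (f t - f0) @[t --> 0^'] --> d ->
  (forall t, 0 < t <= 1 -> f t <= (1 - t) * f0 + t * f1) -> d <= f1 - f0.
Proof.
move=> /cvg_dnbhs_at_right slope_cvg f_le; apply: (cvgr_to_le slope_cvg).
near=> t.
have t01 : 0 < t <= 1.
  by apply/andP; split; near: t; [exact: nbhs_right_gt | exact: nbhs_right_le].
have t_gt0 : 0 < t by case/andP: t01.
by rewrite ler_pdivrMl //; have := f_le t t01; lra.
Unshelve. all: by end_near.
Qed.

Lemma chord_le_slope_cvg (f : R -> R) (d f0 f1 : R) :
  t^-1 * (f t - f0) @[t --> 0^'] --> d ->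
  (forall t, 0 < t <= 1 -> (1 - t) * f0 + t * f1 <= f t) -> f1 - f0 <= d.
Proof.
move=> /cvgN slope_cvg f_ge; suff : - d <= - f1 - - f0 by lra.
apply: (@slope_cvg_le_chord (fun t => - f t)) => [|t /f_ge]; last by lra.
have -> : (fun t => t^-1 * (- f t - - f0)) = - (fun t => t^-1 * (f t - f0)).
  by apply/funext => t; rewrite -[RHS]/(- (t^-1 * (f t - f0))); ring.
exact: slope_cvg.
Qed.

End SlopeChord.

Section InnerProduct.
Variables (R : realType) (n m : nat).
Local Notation Z := ('rV[R]_n * 'rV[R]_m)%type.

Lemma dotvC k (u w : 'rV[R]_k) : dotv u w = dotv w u.
Proof. by apply: eq_bigr => i _; rewrite mulrC. Qed.

Lemma dotvDl k (u v w : 'rV[R]_k) : dotv (u + v) w = dotv u w + dotv v w.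
Proof. by rewrite /dotv -big_split; apply: eq_bigr => i _; rewrite mxE mulrDl. Qed.

Lemma dotvNl k (u w : 'rV[R]_k) : dotv (- u) w = - dotv u w.
Proof. by rewrite /dotv -sumrN; apply: eq_bigr => i _; rewrite mxE mulNr. Qed.

Lemma dotvZl k c (u w : 'rV[R]_k) : dotv (c *: u) w = c * dotv u w.
Proof. by rewrite /dotv mulr_sumr; apply: eq_bigr => i _; rewrite mxE mulrA. Qed.

Lemma dotvDr k (u v w : 'rV[R]_k) : dotv w (u + v) = dotv w u + dotv w v.
Proof. by rewrite !(dotvC w) dotvDl. Qed.

Lemma dotvNr k (u w : 'rV[R]_k) : dotv w (- u) = - dotv w u.
Proof. by rewrite !(dotvC w) dotvNl. Qed.

Lemma dotvv_ge0 k (u : 'rV[R]_k) : 0 <= dotv u u.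
Proof. by apply: sumr_ge0 => i _; rewrite -expr2 sqr_ge0. Qed.

Lemma dotzC (p q : Z) : dotz p q = dotz q p.
Proof. by rewrite /dotz dotvC (dotvC p.2). Qed.

Lemma dotzDl (p q r : Z) : dotz (p + q) r = dotz p r + dotz q r.
Proof. by rewrite /dotz !dotvDl addrACA. Qed.

Lemma dotzNl (p q : Z) : dotz (- p) q = - dotz p q.
Proof. by rewrite /dotz !dotvNl opprD. Qed.

Lemma dotzZl c (p q : Z) : dotz (c *: p) q = c * dotz p q.
Proof. by rewrite /dotz !dotvZl mulrDr. Qed.

Lemma dotzDr (p q r : Z) : dotz r (p + q) = dotz r p + dotz r q.
Proof. by rewrite !(dotzC r) dotzDl. Qed.

Lemma dotzNr (p q : Z) : dotz q (- p) = - dotz q p.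
Proof. by rewrite !(dotzC q) dotzNl. Qed.

Lemma dotzZr c (p q : Z) : dotz q (c *: p) = c * dotz q p.
Proof. by rewrite !(dotzC q) dotzZl. Qed.

Lemma dotzz_ge0 (p : Z) : 0 <= dotz p p.
Proof. by rewrite addr_ge0 // dotvv_ge0. Qed.

Lemma sqr_normz (p : Z) : normz p ^+ 2 = dotz p p.
Proof. by rewrite sqr_sqrtr // dotzz_ge0. Qed.

Lemma normz_ge0 (p : Z) : 0 <= normz p.
Proof. exact: sqrtr_ge0. Qed.

End InnerProduct.

Section Gradient.
Variables (R : realType) (n m : nat) (L : 'rV[R]_n * 'rV[R]_m -> R).
Local Notation Z := ('rV[R]_n * 'rV[R]_m)%type.

Lemma diff_slope_cvg (z v : Z) : differentiable L z ->
  t^-1 * (L (t *: v + z) - L z) @[t --> 0^'] --> 'd L z v.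
Proof. by move=> L_diff; rewrite -deriveE //; exact: diff_derivable. Qed.

Lemma dotv_Gop1 (z : Z) (v : 'rV[R]_n) : dotv (Gop L z).1 v = 'd L z (v, 0).
Proof.
have -> : (v, 0) = \sum_(i < n) v 0 i *: ((delta_mx 0 i, 0) : Z).
  rewrite [RHS]surjective_pairing; congr pair; apply/esym.
    by rewrite (big_morph fst (id1 := 0) (op1 := +%R)) //= -row_sum_delta.
  by rewrite (big_morph snd (id1 := 0) (op1 := +%R)) //= big1 // => i _; rewrite scaler0.
by rewrite linear_sum; apply: eq_bigr => i _; rewrite linearZ mxE mulrC.
Qed.

Lemma dotv_Gop2 (z : Z) (w : 'rV[R]_m) : dotv (Gop L z).2 w = - 'd L z (0, w).
Proof.
have -> : (0, w) = \sum_(i < m) w 0 i *: ((0, delta_mx 0 i) : Z).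
  rewrite [RHS]surjective_pairing; congr pair; apply/esym.
    by rewrite (big_morph fst (id1 := 0) (op1 := +%R)) //= big1 // => i _; rewrite scaler0.
  by rewrite (big_morph snd (id1 := 0) (op1 := +%R)) //= -row_sum_delta.
rewrite linear_sum -sumrN; apply: eq_bigr => i _.
by rewrite linearZ !mxE mulrC mulrN.
Qed.

Hypotheses (L_diff : forall z, differentiable L z) (L_cc : convex_concave L).

Lemma Gop1_subgrad (x x' : 'rV[R]_n) (y : 'rV[R]_m) :
  dotv (Gop L (x, y)).1 (x' - x) <= L (x', y) - L (x, y).
Proof.
rewrite dotv_Gop1.
apply: (@slope_cvg_le_chord _ (fun t => L (t *: ((x' - x, 0) : Z) + (x, y)))).
  exact: diff_slope_cvg.
move=> t /andP[t_gt0 t_le1].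
have -> : t *: ((x' - x, 0) : Z) + (x, y) = ((1 - t) *: x + t *: x', y).
  congr pair; last by rewrite /= scaler0 add0r.
  by rewrite /= scalerBr scalerBl scale1r addrC addrA addrAC.
by apply: L_cc.1; rewrite t_le1 ltW.
Qed.

Lemma Gop2_supergrad (x : 'rV[R]_n) (y y' : 'rV[R]_m) :
  L (x, y') - L (x, y) <= - dotv (Gop L (x, y)).2 (y' - y).
Proof.
rewrite dotv_Gop2 opprK.
apply: (@chord_le_slope_cvg _ (fun t => L (t *: ((0, y' - y) : Z) + (x, y)))).
  exact: diff_slope_cvg.
move=> t /andP[t_gt0 t_le1].
have -> : t *: ((0, y' - y) : Z) + (x, y) = (x, (1 - t) *: y + t *: y').
  congr pair; first by rewrite /= scaler0 add0r.
  by rewrite /= scalerBr scalerBl scale1r addrC addrA addrAC.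
by apply: L_cc.2; rewrite t_le1 ltW.
Qed.

Lemma Gop_monotone (p q : Z) : 0 <= dotz (Gop L p - Gop L q) (p - q).
Proof.
case: p => x' y'; case: q => x y.
have := Gop1_subgrad x x' y; have := Gop1_subgrad x' x y'.
have := Gop2_supergrad x y y'; have := Gop2_supergrad x' y' y.
rewrite /dotz; move: (Gop L (x, y)) (Gop L (x', y')) => [g1 g2] [g1' g2'] /=.
by rewrite !(dotvDl, dotvDr, dotvNl, dotvNr); lra.
Qed.

End Gradient.

Section AnchoredStep.
Variables (R : ringType) (V : lmodType R).

Definition anchored_step (z0 z g : V) (b a : R) : V := z + b *: (z0 - z) - a *: g.

Lemma anchored_stepB_anchor (z0 z g : V) (b a : R) :
  anchored_step z0 z g b a - z0 = (1 - b) *: (z - z0) - a *: g.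
Proof.
by rewrite /anchored_step scalerBl scale1r -scalerN opprB addrAC [z + _ - z0]addrAC.
Qed.

Lemma anchored_stepB_base (z0 z g : V) (b a : R) :
  anchored_step z0 z g b a - z = - b *: (z - z0) - a *: g.
Proof. by rewrite /anchored_step scaleNr -scalerN opprB addrAC [z + _]addrC addrK. Qed.

Lemma anchored_stepB (z0 z g h : V) (b a : R) :
  anchored_step z0 z g b a - anchored_step z0 z h b a = a *: (h - g).
Proof. by rewrite /anchored_step opprD opprK addrACA subrr add0r addrC scalerBr. Qed.

Definition eag_next (G : V -> V) (z0 z : V) (b a : R) : V :=
  anchored_step z0 z (G (anchored_step z0 z (G z) b a)) b a.

End AnchoredStep.

Lemma eagS (R : realType) (n m : nat) (G : 'rV[R]_n * 'rV[R]_m -> 'rV[R]_n * 'rV[R]_m)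
    (alpha beta : nat -> R) (z0 : 'rV[R]_n * 'rV[R]_m) (k : nat) :
  eag G alpha beta z0 k.+1 = eag_next G z0 (eag G alpha beta z0 k) (beta k) (alpha k).
Proof. by []. Qed.

Lemma B_seq_gt0 (R : realType) (beta : nat -> R) (k : nat) :
  (forall k, 0 < beta k < 1) -> 0 < B_seq beta k.
Proof.
move=> beta01; elim: k => [|k IH] //=.
by rewrite divr_gt0 // subr_gt0; case/andP: (beta01 k).
Qed.

Lemma A_seqS (R : realType) (Rs : R) (beta : nat -> R) (a0 : R) (k : nat) :
  beta k.+1 != 0 ->
  A_seq Rs beta a0 k.+1 =
    alpha_seq Rs beta a0 k * (1 - alpha_seq Rs beta a0 k ^+ 2 * Rs ^+ 2 - beta k ^+ 2)
    / (2 * beta k * (1 - beta k) ^+ 2 * (1 - alpha_seq Rs beta a0 k ^+ 2 * Rs ^+ 2))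
    * B_seq beta k.
Proof.
move=> b'_neq0; rewrite /A_seq /=.
set a := alpha_seq Rs beta a0 k; set b := beta k; set r := a ^+ 2 * Rs ^+ 2.
rewrite -[(1 - b) ^+ 2]/((1 - b) * (1 - b)) !invfM.
transitivity (a * (1 - r - b ^+ 2) * (2^-1 * b^-1 * ((1 - b)^-1 * (1 - b)^-1) * (1 - r)^-1)
  * B_seq beta k * (beta k.+1 * (beta k.+1)^-1)); first by ring.
by rewrite mulfV // mulr1.
Qed.

(* The scalars stand for the inner products of g = G z^k, h = G z^(k+1/2), u = G z^(k+1)
   and w = z^k - z^0. *)
Lemma eag_scalar_decrease (R : realFieldType) (r a b B gg gw uu uw uh gh hh : R) :
  0 < r < 1 -> 0 < a -> 0 < b < 1 -> 0 < B ->
  0 <= b * (gw - uw) + a * (gh - uh) ->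
  uu - 2 * uh + hh <= r * (gg - 2 * gh + hh) ->
  (forall lam, 0 <= hh + 2 * lam * uh + lam ^+ 2 * uu) ->
  a * (1 - r - b ^+ 2) / (2 * b * (1 - b) ^+ 2 * (1 - r)) * B * uu
    + B / (1 - b) * ((1 - b) * uw - a * uh)
  <= a / (2 * b) * B * gg + B * gw.
Proof.
move=> /andP[r_gt0 r_lt1] a_gt0 /andP[b_gt0 b_lt1] B_gt0 mono lip sq.
pose lam := (r / (1 - b) - 1) / (1 - r).
rewrite -subr_ge0.
have -> : a / (2 * b) * B * gg + B * gw
   - (a * (1 - r - b ^+ 2) / (2 * b * (1 - b) ^+ 2 * (1 - r)) * B * uu
      + B / (1 - b) * ((1 - b) * uw - a * uh)) =
  B / b * (b * (gw - uw) + a * (gh - uh))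
  + a * B / (2 * b * r) * (r * (gg - 2 * gh + hh) - (uu - 2 * uh + hh))
  + a * B * (1 - r) / (2 * b * r) * (hh + 2 * lam * uh + lam ^+ 2 * uu).
  rewrite /lam; field.
  by rewrite !subr_eq0 ?gt_eqF ?lt_eqF.
by rewrite !addr_ge0 ?mulr_ge0 ?subr_ge0 ?invr_ge0 ?mulr_ge0 // ltW.
Qed.

Definition potential (R : realType) (n m : nat)
    (G : 'rV[R]_n * 'rV[R]_m -> 'rV[R]_n * 'rV[R]_m) (z0 : 'rV[R]_n * 'rV[R]_m) (A B : R)
    (z : 'rV[R]_n * 'rV[R]_m) : R :=
  A * normz (G z) ^+ 2 + B * dotz (G z) (z - z0).

Lemma VkE (R : realType) (n m : nat) (Rs : R) (beta : nat -> R) (a0 : R)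
    (L : 'rV[R]_n * 'rV[R]_m -> R) (z0 : 'rV[R]_n * 'rV[R]_m) (k : nat) :
  Vk Rs beta a0 L z0 k = potential (Gop L) z0 (A_seq Rs beta a0 k) (B_seq beta k)
                           (eag (Gop L) (alpha_seq Rs beta a0) beta z0 k).
Proof. by []. Qed.

Section PotentialStep.
Variables (R : realType) (n m : nat) (G : 'rV[R]_n * 'rV[R]_m -> 'rV[R]_n * 'rV[R]_m) (Rs : R).
Local Notation Z := ('rV[R]_n * 'rV[R]_m)%type.
Hypotheses (G_mono : forall p q : Z, 0 <= dotz (G p - G q) (p - q))
  (G_lip : forall p q : Z, normz (G p - G q) <= Rs * normz (p - q)).

Lemma eag_potential_step (a b B : R) (z0 z : Z) :
  0 < a -> 0 < a * Rs < 1 -> 0 < b < 1 -> 0 < B ->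
  potential G z0
    (a * (1 - a ^+ 2 * Rs ^+ 2 - b ^+ 2) / (2 * b * (1 - b) ^+ 2 * (1 - a ^+ 2 * Rs ^+ 2)) * B)
    (B / (1 - b)) (eag_next G z0 z b a)
  <= potential G z0 (a / (2 * b) * B) B z.
Proof.
move=> a_gt0 /andP[aRs_gt0 aRs_lt1] b01 B_gt0; rewrite /potential /eag_next.
set r := a ^+ 2 * Rs ^+ 2; set zh := anchored_step z0 z (G z) b a.
set z1 := anchored_step z0 z (G zh) b a.
have r01 : 0 < r < 1 by rewrite /r -exprMn; apply/andP; split; nra.
have mono := G_mono z1 z; rewrite anchored_stepB_base in mono.
have lip : dotz (G z1 - G zh) (G z1 - G zh) <= r * dotz (G z - G zh) (G z - G zh).
  have := G_lip z1 zh; rewrite anchored_stepB => Glip.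
  have := ler_pM (normz_ge0 _) (normz_ge0 _) Glip Glip.
  by rewrite -!expr2 exprMn !sqr_normz dotzZl dotzZr mulrA -expr2 mulrA [Rs ^+ 2 * _]mulrC.
rewrite !sqr_normz anchored_stepB_anchor.
move: mono lip; move: (z - z0) (G z) (G zh) (G z1) => w g h u mono lip.
rewrite dotzDr dotzNr !dotzZr.
apply: (eag_scalar_decrease (gh := dotz g h) (hh := dotz h h) r01 a_gt0 b01 B_gt0).
- by move: mono; rewrite !(dotzDl, dotzDr, dotzNl, dotzNr, dotzZl, dotzZr); lra.
- by move: lip; rewrite !(dotzDl, dotzDr, dotzNl, dotzNr) (dotzC h g) (dotzC h u); lra.
- move=> lam; have := dotzz_ge0 (h + lam *: u).
  by rewrite !(dotzDl, dotzDr, dotzZl, dotzZr) (dotzC h u); lra.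
Qed.

End PotentialStep.

Theorem lemma2 (R : realType) (n m : nat) (Rs : R) (beta : nat -> R) (a0 : R)
  (L : 'rV[R]_n * 'rV[R]_m -> R) (z0 : 'rV[R]_n * 'rV[R]_m) :
  0 < Rs ->
  (forall k, 0 < beta k < 1) ->
  0 < a0 < 1 / Rs ->
  (forall k, 0 < alpha_seq Rs beta a0 k < 1 / Rs) ->
  smooth_cc Rs L ->
  convex_concave L ->
  forall k : nat, Vk Rs beta a0 L z0 k.+1 <= Vk Rs beta a0 L z0 k.
Proof.
move=> Rs_gt0 beta01 _ alpha_bound [L_diff G_lip] L_cc k.
have /andP[a_gt0 a_lt] := alpha_bound k.
have aRs01 : 0 < alpha_seq Rs beta a0 k * Rs < 1.
  by rewrite mulr_gt0 //= -ltr_pdivlMr // mul1r -[Rs^-1]mul1r.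
rewrite !VkE eagS A_seqS; last by have /andP[/gt_eqF -> _] := beta01 k.+1.
rewrite [A_seq _ _ _ k]/A_seq.
apply: eag_potential_step => //; [exact: Gop_monotone | exact: B_seq_gt0].
Qed.
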